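(* Let $G$ be a finite group. (1) Write $G/G'=\{g_0G',\ldots,g_kG'\}$ with the cosets pairwise distinct. Then for each $i\in[0,k]$ there exists $S_i\in\mathcal F(G)$ with $\pi(S_i)=g_iG'$. For any such choice of $S_0,\dots,S_k$, the set $\mathcal C=\{[S_i]:i\in[0,k]\}$ is a subgroup of $\mathcal C(\mathcal B(G),\mathcal F(G))$ and the map $G/G'\to\mathcal C$, $g_iG'\mapsto[S_i]$, is a group isomorphism (so the class semigroup contains a subgroup isomorphic to $G/G'$, the class group of the complete integral closure of $\mathcal B(G)$). Moreover, $[S\boldsymbol{\cdot}S_i]\in\mathcal C$ for every $i\in[0,k]$ and every $S\in\mathcal F(G)$. (2) The map $\mathsf Z(G)\to\mathcal C(\mathcal B(G),\mathcal F(G))^\times$, $g\mapsto[g]$, is a group isomorphism onto the group of invertible elements of the class semigroup.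
   Context: Let $G$ be a finite group written multiplicatively with identity $1_G$; $G'$ is its commutator subgroup and $\mathsf Z(G)$ its center. $\mathcal F(G)$ is the free abelian monoid with basis $G$; its elements are sequences $S=g_1\boldsymbol{\cdot}\ldots\boldsymbol{\cdot}g_\ell$ (operation $\boldsymbol{\cdot}$ = concatenation, identity the empty sequence $1_{\mathcal F(G)}$; an element $g\in G$ is also viewed as a one-term sequence). $\pi(S)=\{g_{\tau(1)}\cdots g_{\tau(\ell)}:\tau\text{ a permutation of }[1,\ell]\}$, $\pi(1_{\mathcal F(G)})=\{1_G\}$, and $\mathcal B(G)=\{S\in\mathcal F(G):1_G\in\pi(S)\}$. For $S,S'\in\mathcal F(G)$, $S\sim S'$ means: for all $T\in\mathcal F(G)$, $S\boldsymbol{\cdot}T\in\mathcal B(G)\iff S'\boldsymbol{\cdot}T\in\mathcal B(G)$; this is a congruence, $[S]$ is the class of $S$, and the class semigroup $\mathcal C(\mathcal B(G),\mathcal F(G))$ is the set of classes, written additively with $[S]+[T]=[S\boldsymbol{\cdot}T]$ and zero $[1_{\mathcal F(G)}]$. *)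

From mathcomp Require Import all_boot all_fingroup all_solvable.
Set Implicit Arguments. Unset Strict Implicit. Unset Printing Implicit Defensive.
Import GroupScope.

Section ClassSemigroup.
Variable gT : finGroupType.

(* A sequence S in F(G) (free abelian monoid over G) is represented by a list;
   all notions below are invariant under permutation of the list. *)

Definition piS (S : seq gT) : {set gT} :=
  [set g | has (fun t => \prod_(x <- t) x == g) (permutations S)].

Definition inB (S : seq gT) : bool := 1 \in piS S.

(* S ~ S' : for all T, S.T in B(G) iff S'.T in B(G).  Equality of classes
   [S] = [S'] in the class semigroup C(B(G),F(G)); [S]+[T] = [S.T] and the
   zero is [1_F] = [::]. *)
Definition simB (S S' : seq gT) : Prop :=
  forall T : seq gT, inB (S ++ T) = inB (S' ++ T).

Definition class_unit (S : seq gT) : Prop :=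
  exists T : seq gT, simB (S ++ T) [::].
End ClassSemigroup.

From mathcomp Require Import all_boot all_fingroup all_solvable zify.
Import GroupScope.
Set Implicit Arguments. Unset Strict Implicit. Unset Printing Implicit Defensive.

(* Since G/G' is abelian, every ordered product of S lies in the G'-coset of
   the product of S.  Call S full when pi(S) is that whole coset.  Fullness
   survives concatenation, and for full S whether S.T is product-one depends
   only on the cosets of the products, so the classes of full sequences form a
   copy of G/G'.  Every coset is pi(S) for a full S: take g together with a
   product-one sequence R whose ordered products cover G', built from one
   block a^-1, b^-1, a, b for each commutator [~ a, b] in a product of
   commutators.
   For (2), a central term can be moved to the front of any ordering, so a
   sequence of central elements behaves like its product.  Conversely, if
   S.T ~ 1 then for every term w of S.T and every x the sequence
   S.T.x^-1.x^w is product-one, hence so is x^-1.x^w, i.e. [~ x, w] = 1. *)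

Local Notation sprod s := (\prod_(t <- s) t).

Section OrderedProducts.
Variable gT : finGroupType.
Implicit Types (S T W u v : seq gT) (a b g w x y : gT).

Lemma mulg_eq1C a b : (a * b == 1) = (b * a == 1).
Proof. by rewrite -!eq_invg_mul eq_invg_sym eq_sym. Qed.

Lemma prod_rot_eq1 i u : (sprod (seq.rot i u) == 1) = (sprod u == 1).
Proof. by rewrite -{2}(cat_take_drop i u) /rot !big_cat mulg_eq1C. Qed.

Lemma prod_cat_cons_central g u v : (forall y, commute g y) ->
  sprod (u ++ g :: v) = g * sprod (u ++ v).
Proof.
move=> cg; rewrite !big_cat big_cons /= !mulgA; congr (_ * _).
by apply/esym/commute_prod => y _; apply: cg.
Qed.

Lemma perm_prod_abelian u v : (forall a b, commute a b) ->
  perm_eq u v -> sprod u = sprod v.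
Proof.
move=> cG; elim: u v => [|g u IH] v; first by rewrite perm_sym => /perm_nilP->.
move=> puv; have gv : g \in v by rewrite -(perm_mem puv) mem_head.
case/splitPr: gv puv => v1 v2 puv; rewrite prod_cat_cons_central // big_cons.
rewrite (IH (v1 ++ v2)) // -(perm_cons g) (perm_trans puv) //.
by rewrite -cat1s perm_catCA.
Qed.

Lemma piP S g : reflect (exists2 u, perm_eq u S & sprod u = g) (g \in piS S).
Proof.
rewrite inE; apply: (iffP hasP) => [[u] | [u]].
  by rewrite mem_permutations => pu /eqP <-; exists u.
by move=> pu <-; exists u; rewrite ?mem_permutations.
Qed.

Lemma piS_perm S S' : perm_eq S S' -> piS S = piS S'.
Proof.
move=> pS; apply/setP => g; apply/piP/piP => -[u pu <-]; exists u => //.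
  exact: perm_trans pS.
by rewrite (perm_trans pu) // perm_sym.
Qed.

Lemma piS_catC S T : piS (S ++ T) = piS (T ++ S).
Proof. by apply: piS_perm; rewrite perm_catC. Qed.

Lemma mem_piS_prod S : sprod S \in piS S.
Proof. by apply/piP; exists S. Qed.

Lemma mem_piS_cat S T a b : a \in piS S -> b \in piS T -> a * b \in piS (S ++ T).
Proof.
move=> /piP[u pu <-] /piP[v pv <-]; apply/piP; exists (u ++ v).
  exact: perm_cat.
by rewrite big_cat.
Qed.

Lemma piS_nil : piS [::] = [set 1 : gT].
Proof.
apply/setP => g; rewrite inE; apply/piP/eqP => [[u /perm_nilP-> <-] | ->].
  by rewrite big_nil.
by exists [::]; rewrite ?big_nil.
Qed.

Lemma piS_catl S T : 1 \in piS T -> {subset piS S <= piS (S ++ T)}.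
Proof. by move=> T1 a Sa; rewrite -(mulg1 a) mem_piS_cat. Qed.

Lemma piS_catr S T : 1 \in piS S -> {subset piS T <= piS (S ++ T)}.
Proof. by move=> S1 a Ta; rewrite -(mul1g a) mem_piS_cat. Qed.

Lemma inB_pair x y : inB [:: x; y] = (x * y == 1).
Proof.
apply/piP/eqP => [[u /perm_consP[i [u' [rot_u /perm_small_eq u'y]]]] | xy1].
  move/eqP; rewrite -(prod_rot_eq1 i) rot_u u'y //.
  by rewrite !big_cons big_nil mulg1 => /eqP.
by exists [:: x; y]; rewrite // !big_cons big_nil mulg1.
Qed.

Lemma inB_perm_cons W w : inB W -> w \in W ->
  exists2 v, perm_eq (w :: v) W & w * sprod v = 1.
Proof.
move=> /piP[u uW u1]; rewrite -(perm_mem uW) => wu.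
case/splitPr: wu uW u1 => u1' u2 uW u1.
exists (u2 ++ u1'); first by apply: perm_trans uW; rewrite -cat_cons perm_catC.
move/eqP: u1; rewrite -(prod_rot_eq1 (size u1')) rot_size_cat.
by rewrite !big_cat big_cons mulgA => /eqP.
Qed.

Lemma simB_seq1_inj g h : simB [:: g] [:: h] -> g = h.
Proof.
move/(_ [:: g^-1]); rewrite !inB_pair mulgV eqxx.
by rewrite -eq_mulgV1 => /esym/eqP.
Qed.

End OrderedProducts.

Section CentralSequences.
Variable gT : finGroupType.
Implicit Types (S T U W : seq gT) (g h w x : gT).
Local Notation Z := 'Z([set: gT]).

Lemma center_commute g y : g \in Z -> commute g y.
Proof. by case/centerP=> _ cg; apply: cg; rewrite inE. Qed.

Lemma mem_piS_consZ g T h : g \in Z ->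
  (h \in piS (g :: T)) = (g^-1 * h \in piS T).
Proof.
move=> /center_commute cg; apply/piP/piP => [[u pu <-] | [u pu uh]].
  have gu : g \in u by rewrite (perm_mem pu) mem_head.
  case/splitPr: gu pu => u1 u2 pu; exists (u1 ++ u2).
    by rewrite -(perm_cons g) (perm_trans _ pu) // -cat1s perm_catCA.
  by rewrite prod_cat_cons_central // mulKg.
by exists (g :: u); rewrite ?perm_cons // big_cons uh mulKVg.
Qed.

Lemma mem_piS_catZ S U h : {subset S <= Z} ->
  (h \in piS (S ++ U)) = ((sprod S)^-1 * h \in piS U).
Proof.
elim: S h => [|g S IH] h SZ; first by rewrite big_nil invg1 mul1g.
have gZ : g \in Z by rewrite SZ ?mem_head.
rewrite cat_cons mem_piS_consZ // IH => [|y yS]; last by rewrite SZ ?inE ?yS ?orbT.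
by rewrite big_cons invMg mulgA.
Qed.

Lemma simB_central S S' : {subset S <= Z} -> {subset S' <= Z} ->
  sprod S = sprod S' -> simB S S'.
Proof. by move=> SZ S'Z eqS T; rewrite /inB !mem_piS_catZ // eqS. Qed.

Lemma prod_center S : {subset S <= Z} -> sprod S \in Z.
Proof. by move=> SZ; rewrite big_seq group_prod. Qed.

Lemma simB_nil_center W : simB W [::] -> {subset W <= Z}.
Proof.
move=> Wsim w wW; apply/centerP; split => [|x _]; first exact: in_setT.
have /inB_perm_cons/(_ wW)[v vW wv1] : inB W.
  by have := Wsim [::]; rewrite cats0 => ->; rewrite /inB piS_nil set11.
(* W reordered as w, v has sprod v = w^-1, and x^-1 * w * x^w * w^-1 = 1. *)
suff : inB [:: x^-1; x ^ w] by rewrite inB_pair => /commgP/esym.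
rewrite -Wsim; apply/piP; exists [:: x^-1, w, x ^ w & v].
  rewrite -(perm_cat2r [:: x^-1; x ^ w]) in vW.
  apply: perm_trans vW; apply/seq.permP => p /=; rewrite count_cat /=; lia.
have vw : sprod v = w^-1 by move/eqP: wv1; rewrite -eq_invg_mul eq_sym => /eqP.
by rewrite !big_cons vw /conjg !mulgA !mulgK mulVg.
Qed.

Lemma class_unit_seq1 g : g \in Z -> class_unit [:: g].
Proof.
move=> gZ; exists [:: g^-1]; apply: simB_central => //.
  by apply/allP; rewrite /= gZ groupV gZ.
by rewrite !big_cons big_nil mulg1 mulgV.
Qed.

Lemma simB_seq1M g h : g \in Z -> h \in Z -> simB [:: g * h] [:: g; h].
Proof.
move=> gZ hZ; apply: simB_central.
- by apply/allP; rewrite /= groupM.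
- by apply/allP; rewrite /= gZ hZ.
by rewrite !big_cons big_nil !mulg1.
Qed.

Lemma class_unit_center S : class_unit S -> exists2 g, g \in Z & simB S [:: g].
Proof.
move=> [T /simB_nil_center STZ].
have SZ : {subset S <= Z} by move=> y yS; rewrite STZ // mem_cat yS.
exists (sprod S); first exact: prod_center.
apply: simB_central => //; last by rewrite big_seq1.
by apply/allP; rewrite /= prod_center.
Qed.

End CentralSequences.

Section Abelianization.
Variable gT : finGroupType.
Implicit Types (S T R : seq gT) (a b g h z : gT).
Local Notation G' := ([set: gT]^`(1)).
Local Notation q := (coset G').

Lemma norm_der1 a : a \in 'N(G').
Proof. exact: subsetP (normal_norm (der_normal 1 [set: gT]%G)) _ (in_setT a). Qed.

Lemma coset_der1M a b : q (a * b) = q a * q b.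
Proof. exact: coset_morphM (norm_der1 a) (norm_der1 b). Qed.

Lemma coset_der1_prod S : q (sprod S) = \prod_(a <- S) q a.
Proof. by apply: big_morph; [exact: coset_der1M | exact: morph1]. Qed.

Lemma mem_coset_der1 h (x : coset_of G') : (h \in (x : {set gT})) = (q h == x).
Proof.
apply/idP/eqP => [/coset_mem // | <-].
by rewrite val_coset ?norm_der1 // rcoset_refl.
Qed.

Lemma commute_coset_der1 (u v : coset_of G') : commute u v.
Proof.
case: (cosetP u) (cosetP v) => a _ -> [b _ ->].
by rewrite /commute -!coset_der1M (commgC a b) coset_kerr // mem_commg ?inE.
Qed.

Lemma mem_piS_coset S h : h \in piS S -> q h = q (sprod S).
Proof.
case/piP=> u pu <-; rewrite !coset_der1_prod -!(big_map q xpredT id).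
by apply: perm_prod_abelian commute_coset_der1 _; apply: perm_map.
Qed.

(* The converse inclusion always holds, by mem_piS_coset. *)
Definition pi_full S := forall h, q h = q (sprod S) -> h \in piS S.

Lemma pi_fullE S : pi_full S -> piS S = q (sprod S) :> {set gT}.
Proof.
move=> fS; apply/setP => h; rewrite mem_coset_der1.
by apply/idP/eqP => [/mem_piS_coset | /fS].
Qed.

Lemma pi_full_coset S (x : coset_of G') :
  piS S = x -> pi_full S /\ q (sprod S) = x.
Proof.
move=> Sx; have qS : q (sprod S) = x.
  by apply/eqP; rewrite -mem_coset_der1 -Sx mem_piS_prod.
by split=> // h; rewrite Sx mem_coset_der1 qS => ->.
Qed.

Lemma pi_full_catl S T : pi_full S -> pi_full (S ++ T).
Proof.
move=> fS h; rewrite big_cat coset_der1M => qh.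
rewrite -(mulgKV (sprod T) h) mem_piS_cat ?mem_piS_prod ?fS //.
by rewrite coset_der1M qh morphV ?norm_der1 // mulgK.
Qed.

Lemma pi_full_catr S T : pi_full S -> pi_full (T ++ S).
Proof.
move=> fS h qh; rewrite piS_catC; apply: (pi_full_catl (T := T) fS).
by rewrite qh; apply: mem_piS_coset; rewrite piS_catC mem_piS_prod.
Qed.

Lemma inB_pi_full S : pi_full S -> inB S = (q (sprod S) == 1).
Proof. by move=> fS; rewrite /inB (pi_fullE fS) mem_coset_der1 morph1. Qed.

Lemma simB_pi_full S S' : pi_full S -> pi_full S' ->
  simB S S' <-> q (sprod S) = q (sprod S').
Proof.
move=> fS fS'.
have inB_cat U T : pi_full U -> inB (U ++ T) = (q (sprod U) * q (sprod T) == 1).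
  by move=> fU; rewrite inB_pi_full ?big_cat ?coset_der1M //; apply: pi_full_catl.
split=> [eqS | eqq T]; last by rewrite !inB_cat // eqq.
have := eqS [:: (sprod S)^-1].
rewrite !inB_cat // big_seq1 -coset_der1M mulgV morph1 eqxx.
by rewrite morphV ?norm_der1 // -eq_mulgV1 eq_sym => /esym/eqP.
Qed.

Lemma der1_piS z : z \in G' -> exists R, 1 \in piS R /\ z \in piS R.
Proof.
rewrite derg1 => /gen_prodgP[n [c cG' ->]].
apply: (big_ind (fun z => exists R, 1 \in piS R /\ z \in piS R)).
- by exists [::]; rewrite piS_nil set11.
- move=> x y [R [R1 Rx]] [R' [R'1 R'y]].
  by exists (R ++ R'); rewrite -{1}(mulg1 1) !mem_piS_cat.
move=> i _; case/imset2P: (cG' i) => a b _ _ ->.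
exists [:: a^-1; b^-1; a; b]; split; apply/piP.
  exists [:: a; a^-1; b; b^-1]; first by apply/seq.permP => p /=; lia.
  by rewrite !big_cons big_nil mulg1 mulKVg mulgV.
exists [:: a^-1; b^-1; a; b] => //.
by rewrite !big_cons big_nil mulg1 /commg /conjg !mulgA.
Qed.

Lemma exists_piS_der1 : exists R, 1 \in piS R /\ G' \subset piS R.
Proof.
suff [R [R1 sR]] : exists R, 1 \in piS R /\ {subset enum G' <= piS R}.
  by exists R; split=> //; apply/subsetP => z; rewrite -mem_enum => /sR.
have : all (mem G') (enum G') by apply/allP => z; rewrite mem_enum.
elim: (enum G') => [|z zs IH] /=; first by exists [::]; rewrite piS_nil set11.
case/andP=> /der1_piS[R' [R'1 R'z]] /IH[R [R1 sR]].
exists (R ++ R'); split=> [|y]; first by rewrite -(mulg1 1) mem_piS_cat.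
by rewrite inE => /predU1P[-> | /sR]; [apply: piS_catr | apply: piS_catl].
Qed.

Lemma exists_pi_full_coset (x : coset_of G') :
  exists S, pi_full S /\ q (sprod S) = x.
Proof.
have [R [R1 sR]] := exists_piS_der1.
have qR1 : q (sprod R) = 1 by rewrite -(mem_piS_coset R1) morph1.
have fR : pi_full R.
  by move=> h; rewrite qR1 => /(coset_idr (norm_der1 h)); apply/subsetP.
case: (cosetP x) => g _ ->; exists (R ++ [:: g]).
split; first exact: pi_full_catl.
by rewrite big_cat big_seq1 coset_der1M qR1 mul1g.
Qed.

End Abelianization.

Theorem theorem3p8 (gT : finGroupType) :
  (* (1) *)
  ((forall x : coset_of [set: gT]^`(1), exists S : seq gT, piS S = x) /\
   (forall Sx : coset_of [set: gT]^`(1) -> seq gT,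
      (forall x, piS (Sx x) = x) ->
      (* the map gG' |-> [S_g] is a homomorphism ... *)
      (forall x y, simB (Sx x ++ Sx y) (Sx (x * y))) /\
      (* ... which is injective, so a group isomorphism onto C = {[S_x]} *)
      (forall x y, simB (Sx x) (Sx y) -> x = y) /\
      (* [S . S_i] lies in C *)
      (forall (S : seq gT) x, exists y, simB (S ++ Sx x) (Sx y))))
  /\
  (* (2) g |-> [g] is a group isomorphism Z(G) -> C(B(G),F(G))^x *)
  ((forall g, g \in 'Z([set: gT]) -> class_unit [:: g]) /\
   (forall g h, g \in 'Z([set: gT]) -> h \in 'Z([set: gT]) ->
      simB [:: g * h] ([:: g] ++ [:: h])) /\
   (forall g h, g \in 'Z([set: gT]) -> h \in 'Z([set: gT]) ->
      simB [:: g] [:: h] -> g = h) /\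
   (forall S : seq gT, class_unit S ->
      exists2 g, g \in 'Z([set: gT]) & simB S [:: g])).
Proof.
split.
  split=> [x | Sx Sx_x].
    by have [S [fS <-]] := exists_pi_full_coset x; exists S; apply: pi_fullE.
  have fSx x : pi_full (Sx x) by case: (pi_full_coset (Sx_x x)).
  have qSx x : coset _ (sprod (Sx x)) = x by case: (pi_full_coset (Sx_x x)).
  split; [|split].
  - move=> x y.
    apply/simB_pi_full; [exact: pi_full_catl (fSx x) | exact (fSx _) |].
    by rewrite big_cat coset_der1M !qSx.
  - by move=> x y /(simB_pi_full (fSx x) (fSx y)); rewrite !qSx.
  - move=> S x; exists (coset _ (sprod S) * x).
    apply/simB_pi_full; [exact: pi_full_catr (fSx x) | exact (fSx _) |].
    by rewrite big_cat coset_der1M !qSx.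
split; [|split; [|split]].
- exact: class_unit_seq1.
- exact: simB_seq1M.
- by move=> g h _ _; apply: simB_seq1_inj.
- exact: class_unit_center.
Qed.
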